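(* Let $M\in\Lambda_{\mathrm{NF}}$ have blueprint $\alpha$, with $\mathrm{Free}(M)=(x_1,\dots,x_n)$ and $\Omega(x_1,\dots,x_n)=(\chi_1,\dots,\chi_n)$. For each $i\in\{0,\dots,n\}$, let $\alpha_i$ be the restriction of $\alpha$ to $\mathrm{dom}(\alpha)\cap\{a : \mathrm{Free}(M|_a)\subseteq\{x_1,\dots,x_i\}\}$, and let $\beta_i$ be the blueprint of $\lambda x_{i+1}\dots x_n.M$. Then: (1) for each $i\in\{0,\dots,n\}$, $\mathrm{dom}(\beta_i)=\{1^{n-i}\cdot a : a\in\mathrm{dom}(\alpha_i)\}$ and $\beta_i|_{1^{n-i}}=\alpha_i$, where $1^k$ denotes the address consisting of $k$ ones; (2) for each $i\in\{1,\dots,n\}$: (a) there exist addresses $a^i_0,\dots,a^i_{p_i}$ with $\{a^i_0,\dots,a^i_{p_i}\}=\{a : M|_a=x_i\}$ and $\alpha_i\rhd^{a^i_0}_{\chi_i}\cdots\rhd^{a^i_{p_i}}_{\chi_i}\alpha_{i-1}$; (b) if $\{b_0,\dots,b_{p_i}\}=\{a : M|_a=x_i\}$ and $\alpha_i\rhd^{b_0}_{\chi_i}\cdots\rhd^{b_{p_i}}_{\chi_i}\alpha'$, then $\alpha'=\alpha_{i-1}$; (3) $(\chi_1,\dots,\chi_n)\in\mathbb F(\alpha)$.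
   Context: Formulas are built from atoms with $\to$. Let $\mathcal X$ be a countably infinite set of variables with an injective map $\mathcal O:\mathcal X\to\mathbb N$; $x<y$ iff $\mathcal O(x)<\mathcal O(y)$. Terms are pure $\lambda$-terms over $\mathcal X$, not identified up to $\alpha$-conversion; no two $\lambda$'s bind the same variable and no variable is both free and bound. $\mathrm{Free}(M)$ is the strictly increasing sequence of free variables of $M$. HRM terms: variables; $\lambda x.M$ with $M$ HRM and $x$ the greatest free variable of $M$; $(MN)$ with $M,N$ HRM and every free variable of $M$ $\le$ some free variable of $N$. Fix $\Omega$ from variables to formulas with each $\Omega^{-1}(\phi)$ infinite; $\Omega(x_1,\dots,x_n)=(\Omega(x_1),\dots,\Omega(x_n))$. Typing: $x:\Omega(x)$; $\lambda x.M:\chi\to\psi$ if $x:\chi$, $M:\psi$, $\lambda x.M$ HRM; $(MN):\psi$ if $M:\chi\to\psi$, $N:\chi$, $(MN)$ HRM. $\Lambda_{\mathrm{NF}}$ is the set of typed $\beta$-normal terms. Addresses are finite sequences of positive integers with prefix order $\le$, concatenation $\cdot$, empty address $\varepsilon$. Terms are identified with trees: $x$ is $\varepsilon\mapsto x$; $\lambda x.M$ maps $\varepsilon$ to $\lambda x$ with subtree $M$ at $(1)$; $(M_1M_2)$ maps $\varepsilon$ to $@$ with subtrees $M_1,M_2$ at $(1),(2)$; $M|_a$ is the subterm at $a$. For a partial tree $\pi$, $\pi|_a$ is $c\mapsto\pi(a\cdot c)$. Let $\mathfrak S$ consist of all formulas (arity 0) and symbols $@_\phi$ (arity 2). A blueprint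 is a finite partial tree with values in $\mathfrak S$ such that if $\alpha(a)=@_\phi$ then $\alpha|_{a\cdot(1)},\alpha|_{a\cdot(2)}$ are non-empty. Notation: $\emptyset_{\mathbb B}$ empty blueprint; $\phi$ denotes $\varepsilon\mapsto\phi$; $@_\phi(\alpha_1,\alpha_2)$ ($\alpha_i$ non-empty) has root $@_\phi$ and $\alpha_i$ at $(i)$; for pairwise incomparable $\bar a=(a_1,\dots,a_k)$, $*_{\bar a}(\alpha_1,\dots,\alpha_k)$ is the blueprint of minimal domain with restriction $\alpha_i$ at $a_i$; $*(\alpha_1,\dots,\alpha_k)=*_{((1),\dots,(k))}(\dots)$. The stable part of $M\in\Lambda_{\mathrm{NF}}$ is the set of $a\in\mathrm{dom}(M)$ with $\mathrm{Free}(M|_a)\subseteq\mathrm{Free}(M)$ and $M|_a$ a variable or an application. The blueprint of $M$ maps each $a$ in the stable part to $\psi$ if $M|_a$ is a variable of type $\psi$, and to $@_\psi$ if $M|_a$ is an application of type $\psi$. Extraction $\alpha\rhd^a_\phi\beta$: (1) $\phi\rhd^\varepsilon_\phi\emptyset_{\mathbb B}$; (2) if $\alpha\rhd^a_\phi\beta$ ($\gamma,\alpha$ non-empty) then $@_\psi(\gamma,\alpha)\rhd^{(2)\cdot a}_\phi*(\gamma,\beta)$; (3) if $\alpha\rhd^a_\phi\beta$, $b\ne\varepsilon$, $(b,c_1,\dots,c_k)$ pairwise incomparable, then $*_{(b,c_1,\dots,c_k)}(\alpha,\gamma_1,\dots,\gamma_k)\rhd^{b\cdot a}_\phi*_{(b,c_1,\dots,c_k)}(\beta,\gamma_1,\dots,\gamma_k)$.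 Write $\alpha\rhd_\phi\beta$ if $\alpha\rhd^a_\phi\beta$ for some $a$, and $\rhd^+_\phi$ for its transitive closure. $\mathbb F(\alpha)$ is the set of sequences $(\phi_1,\dots,\phi_n)$ ($n\ge0$) such that $\alpha\rhd^+_{\phi_n}\cdots\rhd^+_{\phi_1}\emptyset_{\mathbb B}$ (through some intermediate blueprints). *)

From mathcomp Require Import all_boot.
Set Implicit Arguments. Unset Strict Implicit. Unset Printing Implicit Defensive.

Inductive formula := Atom of nat | Arr of formula & formula.

Definition formula_eq_dec (a b : formula) : {a = b} + {a <> b}.
Proof. decide equality; by case: (@eqP _ n n0); [left|right]. Defined.

(** Variables: the countably infinite set nat (the order is given by a
    separate injective map O : var -> nat). *)
Definition var := nat.

(** Pure lambda-terms, not identified up to alpha-conversion. *)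
Inductive term := Var of var | Lam of var & term | App of term & term.

Fixpoint fv (M : term) : seq var :=
  match M with
  | Var x => [:: x]
  | Lam x N => filter (fun y => y != x) (fv N)
  | App N P => fv N ++ fv P
  end.

Fixpoint bv (M : term) : seq var :=
  match M with
  | Var _ => [::]
  | Lam x N => x :: bv N
  | App N P => bv N ++ bv P
  end.

Definition wf_term (M : term) : bool :=
  uniq (bv M) && all (fun x => x \notin bv M) (fv M).

Definition Free (O : var -> nat) (M : term) : seq var :=
  sort (fun x y => O x <= O y) (undup (fv M)).

Fixpoint HRM (O : var -> nat) (M : term) : bool :=
  match M with
  | Var _ => true
  | Lam x N => [&& HRM O N, x \in fv N & all (fun y => O y <= O x) (fv N)]
  | App N P => [&& HRM O N, HRM O P &
                 all (fun y => has (fun z => O y <= O z) (fv P)) (fv N)]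
  end.

Inductive typed (O : var -> nat) (Om : var -> formula) : term -> formula -> Prop :=
  | ty_var x : typed O Om (Var x) (Om x)
  | ty_lam x N psi : typed O Om N psi -> HRM O (Lam x N) ->
      typed O Om (Lam x N) (Arr (Om x) psi)
  | ty_app N P chi psi : typed O Om N (Arr chi psi) -> typed O Om P chi ->
      HRM O (App N P) -> typed O Om (App N P) psi.

Fixpoint beta_normal (M : term) : bool :=
  match M with
  | Var _ => true
  | Lam _ N => beta_normal N
  | App N P => [&& (if N is Lam _ _ then false else true), beta_normal N & beta_normal P]
  end.

Definition LambdaNF (O : var -> nat) (Om : var -> formula) (M : term) : Prop :=
  [/\ wf_term M, (exists psi, typed O Om M psi) & beta_normal M].

Fixpoint typeof (Om : var -> formula) (M : term) : option formula :=
  match M with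
  | Var x => Some (Om x)
  | Lam x N => omap (Arr (Om x)) (typeof Om N)
  | App N P =>
      match typeof Om N, typeof Om P with
      | Some (Arr chi psi), Some chi' =>
          if formula_eq_dec chi chi' then Some psi else None
      | _, _ => None
      end
  end.

Definition address := seq nat.

Fixpoint subterm (M : term) (a : address) : option term :=
  match a with
  | [::] => Some M
  | k :: a' =>
      match M, k with
      | Lam _ N, 1 => subterm N a'
      | App N _, 1 => subterm N a'
      | App _ P, 2 => subterm P a'
      | _, _ => None
      end
  end.

(** Blueprints: partial trees with values in formulas (arity 0) and @_phi (arity 2). *)
Inductive sym := SForm of formula | SApp of formula.

Definition blueprint := address -> option sym.

Definition bp_empty : blueprint := fun _ => None.
Definition bp_single (phi : formula) : blueprint :=
  fun a => if a is [::] then Some (SForm phi) else None.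
Definition bp_restr (al : blueprint) (a : address) : blueprint := fun c => al (a ++ c).
Definition bp_nonempty (al : blueprint) : Prop := exists a, al a <> None.

Definition is_blueprint (al : blueprint) : Prop :=
  [/\ (exists s : seq address, forall a, al a <> None -> a \in s),
      (forall a, al a <> None -> all (fun k => 0 < k) a) &
      (forall a phi, al a = Some (SApp phi) ->
         bp_nonempty (bp_restr al (rcons a 1)) /\ bp_nonempty (bp_restr al (rcons a 2)))].

Definition prefix (a c : address) : bool := a == take (size a) c.
Definition incomparable (a c : address) : bool := ~~ prefix a c && ~~ prefix c a.

Definition bp_app (psi : formula) (g al : blueprint) : blueprint :=
  fun c => match c with
           | [::] => Some (SApp psi)
           | 1 :: d => g d
           | 2 :: d => al d
           | _ => None
           end.

(** *_{(a_1,...,a_k)}(al_1,...,al_k), given as a list of pairs (a_i, al_i). *)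
Fixpoint bp_star (ps : seq (address * blueprint)) (c : address) : option sym :=
  match ps with
  | [::] => None
  | (a, al) :: ps' => if prefix a c then al (drop (size a) c) else bp_star ps' c
  end.

Fixpoint all_bp (ps : seq (address * blueprint)) : Prop :=
  match ps with
  | [::] => True
  | p :: ps' => is_blueprint p.2 /\ all_bp ps'
  end.

(** Extraction  al |>^a_phi be  (blueprints compared extensionally). *)
Inductive extr (phi : formula) : address -> blueprint -> blueprint -> Prop :=
  | extr_base al be :
      al =1 bp_single phi -> be =1 bp_empty -> extr phi [::] al be
  | extr_app a al0 be0 psi g al be :
      extr phi a al0 be0 -> is_blueprint g -> bp_nonempty g -> bp_nonempty al0 ->
      al =1 bp_app psi g al0 ->
      be =1 bp_star [:: ([:: 1], g); ([:: 2], be0)] ->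
      extr phi (2 :: a) al be
  | extr_ctx a al0 be0 b (cs : seq (address * blueprint)) al be :
      extr phi a al0 be0 -> b != [::] ->
      all (fun c => all (fun k => 0 < k) c) (b :: map fst cs) ->
      pairwise incomparable (b :: map fst cs) ->
      all_bp cs ->
      al =1 bp_star ((b, al0) :: cs) ->
      be =1 bp_star ((b, be0) :: cs) ->
      extr phi (b ++ a) al be.

Fixpoint extr_seq (phi : formula) (as_ : seq address) (al be : blueprint) : Prop :=
  match as_ with
  | [::] => al =1 be
  | a :: as' => exists g, extr phi a al g /\ extr_seq phi as' g be
  end.

Inductive extr_plus (phi : formula) : blueprint -> blueprint -> Prop :=
  | ep_one a al be : extr phi a al be -> extr_plus phi al be
  | ep_step a al g be : extr phi a al g -> extr_plus phi g be -> extr_plus phi al be.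

(** al |>+_{phi_n} ... |>+_{phi_1} empty, with the list given reversed. *)
Fixpoint Fchain (al : blueprint) (rs : seq formula) : Prop :=
  match rs with
  | [::] => al =1 bp_empty
  | phi :: rs' => exists be, extr_plus phi al be /\ Fchain be rs'
  end.

Definition inF (al : blueprint) (s : seq formula) : Prop := Fchain al (rev s).

Definition bp_of (Om : var -> formula) (M : term) : blueprint :=
  fun a =>
    match subterm M a with
    | Some N =>
        if all (fun x => x \in fv M) (fv N) then
          match N with
          | Var x => Some (SForm (Om x))
          | App _ _ => omap SApp (typeof Om N)
          | Lam _ _ => None
          end
        else None
    | None => None
    end.

Definition bp_trunc (O : var -> nat) (M : term) (al : blueprint) (i : nat) : blueprint :=
  fun a =>
    match subterm M a with
    | Some N => if all (fun x => x \in take i (Free O M)) (fv N) then al a else None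
    | None => None
    end.

Definition lams (xs : seq var) (M : term) : term := foldr Lam M xs.

From Pilot Require Import Defs.
From mathcomp Require Import all_boot.
Set Implicit Arguments. Unset Strict Implicit. Unset Printing Implicit Defensive.

(* Extracting at an address a deletes exactly the nodes on the path to a, and is
   possible as soon as a carries a formula and every remaining node on that path
   is an application entered through its argument.  So any extraction sequence
   along all occurrences of x_i deletes their prefixes, i.e. exactly the nodes of
   alpha_i whose subterm contains x_i, leaving alpha_(i-1); this gives (2b).
   For (2a), extract argument occurrences before function occurrences: if x_i
   occurred in the function part of a surviving application, HRM and the
   maximality of x_i give an occurrence in its argument, already extracted.
   Chaining from alpha_n = alpha down to alpha_0 = empty gives (3); (1) is a
   direct computation of the subterms of lambda x_(i+1)...x_n.M. *)

Lemma addr_prefixE (a c : address) : Defs.prefix a c = prefix a c.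
Proof. by rewrite /Defs.prefix prefixE eq_sym. Qed.

Lemma prefix_cat2 (a c d : address) : prefix (a ++ c) (a ++ d) = prefix c d.
Proof. by rewrite prefix_catr // eqxx. Qed.

Lemma prefix_cat_prefix (b a c : address) :
  prefix c (b ++ a) -> ~~ prefix b c -> prefix c b.
Proof.
elim: b c => [|x b IH] [|y c] //= /andP [/eqP -> /IH].
by rewrite eqxx.
Qed.

Lemma index_lt_mem_cat (T : eqType) (S R : seq T) a b :
  a \notin S -> index b (S ++ a :: R) < index a (S ++ a :: R) -> b \in S.
Proof.
move=> aS; rewrite !index_cat (negbTE aS) /= eqxx addn0.
by case: ifP => // _; rewrite ltnNge leq_addr.
Qed.

Lemma mem_take_uniq (T : eqType) (s : seq T) i y : uniq s ->
  (y \in take i s) = (y \in s) && (y \notin drop i s).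
Proof.
rewrite -{1 3}(cat_take_drop i s) cat_uniq mem_cat => /and3P[_ /hasPn Hdis _].
case Ht: (y \in take i s); last by rewrite andbN.
by apply/esym/negP => /Hdis; rewrite Ht.
Qed.

Lemma cons_inj (k : nat) : injective (@cons nat k).
Proof. by move=> ? ? []. Qed.

Lemma mem_map_cons (j k : nat) (a : address) (s : seq address) :
  (k :: a \in map (cons j) s) = (k == j) && (a \in s).
Proof.
by apply/mapP/andP => [[b Hb [-> ->]] | [/eqP -> Ha]]; [split | exists a].
Qed.

Section Subterms.

Implicit Types (T N P : term) (a c d : address).

Lemma subterm_nil T : subterm T [::] = Some T.
Proof. by case: T. Qed.

Lemma subterm_cat T c d :
  subterm T (c ++ d) = if subterm T c is Some N then subterm N d else None.
Proof.
elim: c T => [|k c IH] [x|y N|N P] //=; case: k => [|[|[|k]]] //=.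
Qed.

Lemma subterm_key T k d N : subterm T (k :: d) = Some N -> k = 1 \/ k = 2.
Proof. by case: T => [x|y P|P Q]; case: k => [|[|[|k]]]; auto. Qed.

Lemma subterm_pos T a N : subterm T a = Some N -> all (leq 1) a.
Proof.
elim: a T => [|k a IH] T //= HN; case: (subterm_key HN) => Hk; rewrite Hk in HN *;
  by case: T HN => [x|y P|P Q] //= /IH.
Qed.

Fixpoint addrs T : seq address :=
  [::] :: match T with
          | Var _ => [::]
          | Lam _ N => map (cons 1) (addrs N)
          | App N P => map (cons 1) (addrs N) ++ map (cons 2) (addrs P)
          end.

Lemma subterm_addrs T a : subterm T a <> None -> a \in addrs T.
Proof.
elim: T a => [x|y N IH|N IHN P IHP] [|[|[|[|k]]] a] //= Ha;
  by rewrite inE ?mem_cat !mem_map ?IH ?IHN ?IHP ?orbT // => ? ? [].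
Qed.

Lemma subterm_inherit (p : pred term) :
    (forall y N, p (Lam y N) -> p N) ->
    (forall N P, p (App N P) -> p N && p P) ->
  forall T a N, p T -> subterm T a = Some N -> p N.
Proof.
move=> pLam pApp T a; elim: a T => [|k a IH] T N pT; first by rewrite subterm_nil => -[<-].
case: T pT => [x|y P|P Q] //= pT; case: k => [|[|[|k]]] //; apply: IH.
- exact: pLam pT.
- by case/andP: (pApp _ _ pT).
- by case/andP: (pApp _ _ pT).
Qed.

Lemma HRM_subterm O T a N : HRM O T -> subterm T a = Some N -> HRM O N.
Proof. by apply: subterm_inherit => [y P /= /and3P[] | P Q /= /and3P[-> ->]]. Qed.

Lemma beta_normal_subterm T a N :
  beta_normal T -> subterm T a = Some N -> beta_normal N.
Proof. by apply: subterm_inherit => // P Q /= /and3P[_ -> ->]. Qed.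

Lemma notin_bv_subterm x T a N :
  x \notin bv T -> subterm T a = Some N -> x \notin bv N.
Proof.
apply: (subterm_inherit (p := fun T => x \notin bv T)) => [y P | P Q] /=.
  by rewrite inE negb_or => /andP[].
by rewrite mem_cat negb_or.
Qed.

Lemma occurs_fv T a x :
  subterm T a = Some (Var x) -> x \notin bv T -> x \in fv T.
Proof.
elim: T a => [y|y N IH|N IHN P IHP] [|[|[|[|k]]] a] //=.
- by case=> ->; rewrite inE.
- by rewrite inE negb_or mem_filter => /IH Hx /andP [-> /Hx].
- by rewrite mem_cat negb_or mem_cat => /IHN Hx /andP [/Hx ->].
- by rewrite mem_cat negb_or mem_cat => /IHP Hx /andP [_ /Hx ->]; rewrite orbT.
Qed.

Lemma fv_occurs T x : x \in fv T -> exists a, subterm T a = Some (Var x).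
Proof.
elim: T => [y|y N IH|N IHN P IHP] /=.
- by rewrite inE => /eqP ->; exists [::].
- by rewrite mem_filter => /andP [_ /IH [a Ha]]; exists (1 :: a).
- by rewrite mem_cat => /orP [/IHN [a Ha] | /IHP [a Ha]];
    [exists (1 :: a) | exists (2 :: a)].
Qed.

Lemma beta_normal_app_fv N P : beta_normal (App N P) -> exists x, x \in fv N.
Proof.
elim: N P => [y|y N _|N IHN Q _] P; first by exists y; rewrite inE.
  by case/and3P.
by case/and3P => _ /IHN [x Hx] _; exists x; rewrite /= mem_cat Hx.
Qed.

(* Occurrences in an argument come before those in the function part: this is
   the order in which [extr_seq_occ] extracts them. *)
Fixpoint occ (x : var) (T : term) : seq address :=
  match T with
  | Var y => if y == x then [:: [::]] else [::]
  | Lam _ N => map (cons 1) (occ x N)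
  | App N P => map (cons 2) (occ x P) ++ map (cons 1) (occ x N)
  end.

Lemma occP x T a : reflect (subterm T a = Some (Var x)) (a \in occ x T).
Proof.
elim: T a => [y|y N IH|N IHN P IHP] [|k a] /=.
- by case: eqP => [->|ne]; constructor => // -[].
- by case: eqP => _; constructor.
- by apply: (iffP mapP) => -[].
- by rewrite mem_map_cons; case: k => [|[|k]] /=; [constructor|exact: IH|constructor].
- by apply: (iffP idP) => // /[!mem_cat] /orP[] /mapP[].
- rewrite mem_cat !mem_map_cons; case: k => [|[|[|k]]] /=; rewrite ?orbF;
  by [constructor | exact: IHN | exact: IHP].
Qed.

Lemma occ_uniq x T : uniq (occ x T).
Proof.
elim: T => [y|y N IH|N IHN P IHP] /=; first by case: eqP.
  by rewrite (map_inj_uniq (@cons_inj 1)).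
rewrite cat_uniq !(map_inj_uniq (@cons_inj _)) IHN IHP andbT /=.
by apply/hasPn => _ /mapP[a _ ->]; rewrite mem_map_cons.
Qed.

Lemma occ_arg_before_fun x T p d d' :
  p ++ 1 :: d \in occ x T -> p ++ 2 :: d' \in occ x T ->
  index (p ++ 2 :: d') (occ x T) < index (p ++ 1 :: d) (occ x T).
Proof.
have index_map_cons k (a : address) s : index (k :: a) (map (cons k) s) = index a s.
  exact: index_map (@cons_inj k) s a.
elim: T p => [y|y N IH|N IHN P IHP] [|k p] /=; rewrite ?mem_cat ?mem_map_cons //=.
- by case: eqP.
- by case: eqP.
- by case/andP => /eqP -> H1 /andP[_ H2]; rewrite !index_map_cons IH.
- rewrite orbF => _ H2; rewrite !index_cat !mem_map_cons /= H2.
  by rewrite index_map_cons size_map ltn_addr // index_mem.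
- case: k => [|[|[|k]]] //=; rewrite ?orbF => H1 H2;
    rewrite !index_cat !mem_map_cons /= ?H1 ?H2.
  + by rewrite ltn_add2l !index_map_cons IHN.
  + by rewrite !index_map_cons IHP.
Qed.

End Subterms.

Section ExtractCut.

Variable phi : formula.
Implicit Types (a b c : address) (al be : blueprint).

Definition bp_cut a al : blueprint := fun c => if prefix c a then None else al c.

Definition bp_prune (S : seq address) al : blueprint :=
  fun c => if has (prefix c) S then None else al c.

Lemma bp_star_none (cs : seq (address * blueprint)) c :
  all (fun b => ~~ prefix b c) (map fst cs) -> bp_star cs c = None.
Proof.
by elim: cs => [|[b g] cs IH] //= /andP[Hb /IH]; rewrite addr_prefixE (negbTE Hb).
Qed.

Lemma extr_cut a al be : extr phi a al be -> be =1 bp_cut a al.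
Proof.
elim=> {a al be}
    [al be Hal Hbe [|k c]
    | a al0 be0 psi g al be _ IH _ _ _ Hal Hbe [|[|[|[|k]]] c]
    | a al0 be0 b cs al be _ IH _ _ Hinc _ Hal Hbe c];
  rewrite /bp_cut Hal Hbe //= ?addr_prefixE //= ?drop0.
- by rewrite prefix0s.
- by rewrite prefix0s IH.
case Hbc: (prefix b c).
  by move/prefixP: Hbc => [d ->]; rewrite drop_size_cat // prefix_cat2 IH.
case Hc: (prefix c (b ++ a)) => //.
apply/bp_star_none/allP => b' Hb'.
move: Hinc => /= /andP[/allP/(_ b' Hb') /andP[_ Hb'b] _].
apply: contra Hb'b; rewrite addr_prefixE => Hb'c.
exact: prefix_trans Hb'c (prefix_cat_prefix Hc (negbT Hbc)).
Qed.

Lemma extr_eq a al be al' be' :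
  extr phi a al be -> al =1 al' -> be =1 be' -> extr phi a al' be'.
Proof.
case=> [? ? H1 H2 | ? ? ? ? ? ? ? H Hg Hn Hn0 H1 H2 | ? ? ? ? ? ? ? H Hb Hp Hi Hc H1 H2]
  Eal Ebe;
  [apply: extr_base | apply: (extr_app H Hg Hn Hn0) | apply: (extr_ctx H Hb Hp Hi Hc)];
  by move=> c; rewrite -?Eal -?Ebe.
Qed.

Lemma extr_seq_eqr bs al be be' :
  extr_seq phi bs al be -> be =1 be' -> extr_seq phi bs al be'.
Proof.
elim: bs al => [|a bs IH] al /= => [E E' c | [g [Hg /IH Hbe]] E']; first by rewrite E E'.
by exists g; split; last exact: Hbe.
Qed.

Lemma extr_seq_prune bs al be : extr_seq phi bs al be -> be =1 bp_prune bs al.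
Proof.
elim: bs al => [|a bs IH] al /= => [E c | [g [/extr_cut Eg /IH E]] c].
  by rewrite /bp_prune E.
by rewrite E /bp_prune Eg /bp_cut /=; case: prefix; case: has.
Qed.

Lemma extr_plus_eql al al' be : extr_plus phi al be -> al =1 al' -> extr_plus phi al' be.
Proof.
case=> [a ? ? H | a ? g ? H Hp] E.
  by apply: ep_one; apply: extr_eq H E _.
by apply: ep_step _ Hp; apply: extr_eq H E _.
Qed.

Lemma extr_seq_plus a bs al be :
  extr_seq phi (a :: bs) al be -> extr_plus phi al be.
Proof.
elim: bs a al => [|a' bs IH] a al /= [g [H1 H2]].
  by apply: ep_one; apply: extr_eq H1 _ H2.
exact: ep_step H1 (IH _ _ H2).
Qed.

End ExtractCut.

Lemma Fchain_eql (al al' : blueprint) rs : Fchain al rs -> al =1 al' -> Fchain al' rs.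
Proof.
case: rs => [|psi rs] /= => [E E' c | [be [Hbe Hrs]] E']; first by rewrite -E' E.
by exists be; split; first exact: extr_plus_eql Hbe E'.
Qed.

Section Completeness.

Variable phi : formula.
Implicit Types (a c : address) (al : blueprint).

Definition bp_shaped (T : term) al : Prop :=
  forall c, match al c with
            | None => True
            | Some (SApp _) => exists N P, subterm T c = Some (App N P)
            | Some (SForm _) => exists x, subterm T c = Some (Var x)
            end.

Lemma shaped_subterm T al c : bp_shaped T al -> al c <> None -> subterm T c <> None.
Proof. by move/(_ c); case: (al c) => [[f|f]|] // => [[x ->] | [N [P ->]]]. Qed.

Lemma shaped_child T al j d :
  bp_shaped T al -> j \notin [:: 1; 2] -> al (j :: d) = None.
Proof.
move=> Hs Hj; case E: (al (j :: d)) => [s|] //.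
case Ej: (subterm T (j :: d)) (shaped_subterm Hs (c := j :: d)) => [N|]; last by rewrite E; case.
by case: (subterm_key Ej) Hj => ->.
Qed.

Lemma shaped_restr T al k N :
  bp_shaped T al -> subterm T [:: k] = Some N -> bp_shaped N (bp_restr al [:: k]).
Proof. by move=> Hs HN c; move: (Hs (k :: c)); rewrite (subterm_cat T [:: k] c) HN. Qed.

Lemma bp_restr_blueprint al k : is_blueprint al -> is_blueprint (bp_restr al [:: k]).
Proof.
case=> [[s Hs] Hpos Happ]; split.
- by exists (map behead s) => c /Hs Hc; apply/mapP; exists (k :: c).
- by move=> c /Hpos /andP[].
- by move=> c psi /(Happ (k :: c)).
Qed.

Lemma bp_prune_shaped T S al : bp_shaped T al -> bp_shaped T (bp_prune S al).
Proof. by move=> Hs c; move: (Hs c); rewrite /bp_prune; case: has. Qed.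

Lemma bp_prune_blueprint S al : is_blueprint al -> is_blueprint (bp_prune S al).
Proof.
case=> [[s Hs] Hpos Happ]; rewrite /bp_prune; split.
- by exists s => c; case: has => //; apply: Hs.
- by move=> c; case: has => //; apply: Hpos.
move=> c psi; case: ifP => // /negbT Hc /Happ[[d1 H1] [d2 H2]].
have keep e : ~~ has (prefix (c ++ e)) S.
  by apply: contra Hc => /hasP[s' Hs' /catl_prefix Hcs]; apply/hasP; exists s'.
by split; [exists d1 | exists d2]; rewrite /bp_restr cat_rcons (negbTE (keep _)) -cat_rcons.
Qed.

Lemma extr_cut_complete a T al :
  is_blueprint al -> bp_shaped T al -> al a = Some (SForm phi) ->
  (forall p k d, a = p ++ k :: d ->
     al p = None \/ (exists psi, al p = Some (SApp psi)) /\ k = 2) ->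
  extr phi a al (bp_cut a al).
Proof.
elim: a T al => [|k a IH] T al Hbp Hs Ha Hpath.
  have [x HT] : exists x, T = Var x.
    by move: (Hs [::]); rewrite Ha subterm_nil => -[x [->]]; exists x.
  have Hleaf j d : al (j :: d) = None.
    case E: (al (j :: d)) => [s|] //; exfalso.
    by apply: (shaped_subterm Hs (c := j :: d)); rewrite ?E // HT.
  by apply: extr_base => -[|j d]; rewrite /bp_cut ?Ha ?Hleaf.
have [x Hx] : exists x, subterm T (k :: a) = Some (Var x).
  by move: (Hs (k :: a)); rewrite Ha.
have Hk := subterm_key Hx.
move: Hx; rewrite -[k :: a]/([:: k] ++ a) subterm_cat.
case HT': (subterm T [:: k]) => [T'|] // Hx.
have {}IH : extr phi a (bp_restr al [:: k]) (bp_cut a (bp_restr al [:: k])).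
  apply: IH (bp_restr_blueprint k Hbp) (shaped_restr Hs HT') Ha _ => p j d Ea.
  by apply: (Hpath (k :: p) j d); rewrite Ea.
case: (Hpath [::] k a erefl) => [Hroot | [[psi Hroot] Ek]].
- apply: (extr_ctx (b := [:: k]) (cs := [:: ([:: 3 - k], bp_restr al [:: 3 - k])]) IH);
    case: Hk => Ek; subst k => //=; try (split; [exact: bp_restr_blueprint | done]);
    move=> [|[|[|[|j]]] d]; rewrite /bp_cut /= ?addr_prefixE /= ?prefix0s ?drop0 ?Hroot //;
    exact: shaped_child Hs _.
subst k; have [[_ _ Happ] Hg] := (Hbp, bp_restr_blueprint 1 Hbp).
apply: (extr_app (psi := psi) IH Hg (Happ _ _ Hroot).1) => [|[|[|[|[|j]]] d]|[|[|[|[|j]]] d]];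
  rewrite /bp_cut /= ?addr_prefixE /= ?prefix0s ?drop0 ?Hroot //; try exact: shaped_child Hs _.
by exists a; rewrite /bp_restr /= Ha.
Qed.
End Completeness.

Lemma subterm_lams ys M a : subterm (lams ys M) (nseq (size ys) 1 ++ a) = subterm M a.
Proof. by elim: ys => [|y ys IH] //=. Qed.

Lemma subterm_lams_off ys M c : ~~ prefix (nseq (size ys) 1) c ->
  subterm (lams ys M) c = None \/ exists y N, subterm (lams ys M) c = Some (Lam y N).
Proof.
elim: ys c => [|y ys IH] [|[|[|k]] c] //=;
  by [left | right; exists y, (lams ys M) | exact: IH].
Qed.

Lemma mem_fv_lams ys M x : (x \in fv (lams ys M)) = (x \in fv M) && (x \notin ys).
Proof.
elim: ys => [|y ys IH] /=; first by rewrite andbT.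
by rewrite mem_filter IH inE negb_or andbCA andbA.
Qed.

Definition node_sym (Om : var -> formula) (N : term) : option sym :=
  match N with
  | Var x => Some (SForm (Om x))
  | App _ _ => omap SApp (typeof Om N)
  | Lam _ _ => None
  end.

Section Truncation.

Variables (O : var -> nat) (Om : var -> formula) (M : term).
Hypotheses (inj_O : injective O) (wf_M : wf_term M) (HRM_M : HRM O M)
  (bn_M : beta_normal M).

Local Notation xs := (Free O M).
Local Notation alpha i := (bp_trunc O M (bp_of Om M) i).

Lemma Free_uniq : uniq xs.
Proof. by rewrite sort_uniq undup_uniq. Qed.

Lemma mem_Free x : (x \in xs) = (x \in fv M).
Proof. by rewrite mem_sort mem_undup. Qed.

Lemma Free_take_le i y : i < size xs -> y \in take i.+1 xs -> O y <= O (nth 0 xs i).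
Proof.
move=> Hi Hy; have Hy_xs : y \in xs := mem_take Hy.
rewrite -(nth_index 0 Hy_xs).
apply: (sorted_leq_nth (leT := fun x y => O x <= O y)) => //.
- by move=> ? ? ?; apply: leq_trans.
- by apply: sort_sorted => ? ?; apply: leq_total.
- by rewrite inE index_mem.
- by rewrite -ltnS; apply: index_ltn Hy.
Qed.

Lemma nth_Free_notin_take i : i < size xs -> nth 0 xs i \notin take i xs.
Proof. by move=> Hi; apply/negP => /index_ltn; rewrite index_uniq ?ltnn ?Free_uniq. Qed.

Lemma trunc_val i c : alpha i c =
  if subterm M c is Some N then
    if all (fun x => x \in take i xs) (fv N) then node_sym Om N else None
  else None.
Proof.
rewrite /bp_trunc /bp_of; case: (subterm M c) => [N|] //; case: ifP => // Hall.
by rewrite (sub_all _ Hall) => [|x /mem_take]; [case: N Hall | rewrite mem_Free].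
Qed.

Lemma trunc_var i c x :
  subterm M c = Some (Var x) -> x \in take i xs -> alpha i c = Some (SForm (Om x)).
Proof. by move=> Hc Hx; rewrite trunc_val Hc /= Hx. Qed.

Lemma trunc_some i c : alpha i c <> None ->
  exists2 N, subterm M c = Some N &
    all (fun x => x \in take i xs) (fv N) /\ alpha i c = node_sym Om N.
Proof.
by rewrite trunc_val; case: (subterm M c) => [N|] //; case: ifP => // Hall _; exists N.
Qed.

Lemma trunc_shaped i : bp_shaped M (alpha i).
Proof.
move=> c; case E: (alpha i c) => [s|] //.
have [|N HN [_]] := @trunc_some i c; first by rewrite E.
rewrite E; case: N HN => [x|y P|P Q] HN //; first by case=> ->; exists x.
by rewrite /node_sym; case: typeof => // f [->]; exists P, Q.
Qed.

Lemma trunc_nonempty i c N x :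
  subterm M c = Some N -> all (fun y => y \in take i xs) (fv N) -> x \in fv N ->
  bp_nonempty (bp_restr (alpha i) c).
Proof.
move=> HN /allP Hall Hx; have [d Hd] := fv_occurs Hx.
by exists d; rewrite /bp_restr (@trunc_var i _ x) ?subterm_cat ?HN ?Hall.
Qed.

Lemma trunc_blueprint i : is_blueprint (alpha i).
Proof.
split.
- by exists (addrs M) => c /trunc_some[N HN _]; apply: subterm_addrs; rewrite HN.
- by move=> c /trunc_some[N HN _]; apply: subterm_pos HN.
move=> c psi E; have [|N HN [Hall]] := @trunc_some i c; first by rewrite E.
rewrite E; case: N HN Hall => [x|y P|P Q] HN //; rewrite /= all_cat => /andP[HallP HallQ] _.
have /and3P[_ _ /allP Hvars] := HRM_subterm HRM_M HN.
have [h Hh] := beta_normal_app_fv (beta_normal_subterm bn_M HN).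
have /hasP[z Hz _] := Hvars h Hh.
by split; [apply: (trunc_nonempty _ HallP Hh) | apply: (trunc_nonempty _ HallQ Hz)];
  rewrite -cats1 subterm_cat HN /= subterm_nil.
Qed.

Lemma trunc0 : alpha 0 =1 bp_empty.
Proof.
move=> c; rewrite trunc_val take0; case E: (subterm M c) => [N|] //.
have := beta_normal_subterm bn_M E.
case: N E => [x|y P|P Q] E //; first by case: ifP.
by case/beta_normal_app_fv => x Hx; rewrite /= all_cat; case: (fv P) Hx.
Qed.

Lemma trunc_size : alpha (size xs) =1 bp_of Om M.
Proof.
move=> c; rewrite /bp_trunc /bp_of take_size; case: (subterm M c) => [N|] //.
by rewrite (eq_all mem_Free); case: all.
Qed.

Lemma bp_of_lams i c : i <= size xs ->
  bp_of Om (lams (drop i xs) M) c =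
    if prefix (nseq (size xs - i) 1) c then alpha i (drop (size xs - i) c) else None.
Proof.
move=> Hi; rewrite -(size_drop i xs).
case: ifP => [/prefixP[a ->] | /negbT Hc]; last first.
  by rewrite /bp_of; case: (subterm_lams_off M Hc) => [-> | [y [N ->]]] //; case: all.
rewrite drop_size_cat ?size_nseq // /bp_of subterm_lams trunc_val.
case: (subterm M a) => [N|] //.
rewrite (eq_all (a2 := fun y => y \in take i xs)) => [|y]; first by case: all; case: N.
by rewrite mem_fv_lams (mem_take_uniq _ _ Free_uniq) mem_Free.
Qed.

Section Step.

Variable i : nat.
Hypothesis lt_i : i < size xs.
Local Notation x := (nth 0 xs i).

Lemma nth_Free_fv : x \in fv M.
Proof. by rewrite -mem_Free mem_nth. Qed.

Lemma nth_Free_notin_bv : x \notin bv M.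
Proof. by case/andP: wf_M => _ /allP; apply; apply: nth_Free_fv. Qed.

Lemma prune_occurrences (bs : seq address) :
  (forall a, a \in bs <-> subterm M a = Some (Var x)) ->
  bp_prune bs (alpha i.+1) =1 alpha i.
Proof.
move=> Hbs c; rewrite /bp_prune !trunc_val (take_nth 0 lt_i).
case E: (subterm M c) => [N|]; last by case: has.
case: (boolP (has _ _)) => [/hasP[s /Hbs Hs /prefixP[d Ed]] | /hasPn Hc].
  have HxN : x \in fv N.
    by apply: occurs_fv (notin_bv_subterm nth_Free_notin_bv E); rewrite -Hs Ed subterm_cat E.
  by case: ifP => // /allP/(_ x HxN); rewrite (negbTE (nth_Free_notin_take lt_i)).
have HxN : x \notin fv N.
  apply/negP => /fv_occurs[d Hd].
  have /Hc : c ++ d \in bs by apply/Hbs; rewrite subterm_cat E.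
  by rewrite prefix_prefix.
rewrite (@eq_in_all _ _ (fun y => y \in take i xs)) // => y Hy.
by rewrite mem_rcons inE; case: eqP => // Ey; rewrite -Ey Hy in HxN.
Qed.

Lemma occurs_fun_arg p N Q d :
  subterm M p = Some (App N Q) -> all (fun y => y \in take i.+1 xs) (fv (App N Q)) ->
  subterm N d = Some (Var x) -> exists d', subterm Q d' = Some (Var x).
Proof.
move=> HNQ Hall Hd; apply: fv_occurs.
have /notin_bv_subterm/(_ HNQ) := nth_Free_notin_bv; rewrite /= mem_cat negb_or => /andP[HxN _].
have /and3P[_ _ /allP/(_ x (occurs_fv Hd HxN))/hasP[z Hz Hxz]] := HRM_subterm HRM_M HNQ.
suff -> : x = z by [].
apply: inj_O; apply/eqP; rewrite eqn_leq Hxz (Free_take_le lt_i) //.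
by move/allP: Hall; apply; rewrite mem_cat Hz orbT.
Qed.

Lemma extr_occ_step (S R : seq address) a : S ++ a :: R = occ x M ->
  extr (Om x) a (bp_prune S (alpha i.+1)) (bp_prune (rcons S a) (alpha i.+1)).
Proof.
move=> EL; set A := bp_prune S (alpha i.+1).
have inL b : b \in S ++ a :: R -> subterm M b = Some (Var x) by rewrite EL => /occP.
have Ha : subterm M a = Some (Var x) by apply: inL; rewrite mem_cat mem_head orbT.
have aS : a \notin S.
  by move: (occ_uniq x M); rewrite -EL cat_uniq /= negb_or => /and3P[_ /andP[]].
have Hvalue : A a = Some (SForm (Om x)).
  rewrite /A /bp_prune ifN; last first.
    apply/hasPn => s Hs; apply/negP => /prefixP[d Es].
    have := inL s; rewrite mem_cat Hs Es subterm_cat Ha => /(_ isT).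
    by case: d Es => [|? ?] // /[!cats0] Es; rewrite -Es Hs in aS.
  by apply: trunc_var Ha _; rewrite (take_nth 0 lt_i) mem_rcons mem_head.
have Hpath p k d : a = p ++ k :: d ->
    A p = None \/ (exists psi, A p = Some (SApp psi)) /\ k = 2.
  move=> Ea; rewrite /A /bp_prune; case: ifP => [_|/negbT Hp]; first by left.
  case Ep: (alpha i.+1 p) => [v|]; last by left.
  have [|N HN [Hall Hv]] := @trunc_some i.+1 p; first by rewrite Ep.
  move: Ha; rewrite Ea subterm_cat HN => Hk.
  rewrite Ep in Hv; case: N HN Hall Hv Hk => [y|y N|N Q] HN Hall Hv Hk //.
  right; split; first by move: Hv; rewrite /node_sym; case: typeof => // f [->]; exists f.
  (* An occurrence in the function part would force, by HRM, an earlier one in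
     the argument, whose extraction has already removed [p]. *)
  case: (subterm_key Hk) => Ek //; subst k; exfalso.
  have [d' Hd'] := occurs_fun_arg HN Hall Hk.
  have HS : p ++ 2 :: d' \in S.
    apply: (index_lt_mem_cat (R := R) aS); rewrite EL Ea.
    by apply: occ_arg_before_fun; apply/occP; rewrite subterm_cat HN.
  by move/hasP: Hp; apply; exists (p ++ 2 :: d'); rewrite ?prefix_prefix.
apply: extr_eq (extr_cut_complete _ _ Hvalue Hpath) _ _ => //.
- exact/bp_prune_blueprint/trunc_blueprint.
- exact/bp_prune_shaped/trunc_shaped.
- by move=> c; rewrite /A /bp_cut /bp_prune has_rcons; case: prefix; case: has.
Qed.

Lemma extr_seq_occ : extr_seq (Om x) (occ x M) (alpha i.+1) (alpha i).
Proof.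
apply: extr_seq_eqr (prune_occurrences (fun a => iff_sym (rwP (occP x M a)))).
suff Hsuff R S : S ++ R = occ x M ->
    extr_seq (Om x) R (bp_prune S (alpha i.+1)) (bp_prune (occ x M) (alpha i.+1)).
  exact: Hsuff _ [::] erefl.
elim: R S => [|a R IH] S EL /=; first by rewrite -EL cats0.
exists (bp_prune (rcons S a) (alpha i.+1)); split; first exact: extr_occ_step EL.
by apply: IH; rewrite cat_rcons.
Qed.

End Step.

Lemma Fchain_trunc j : j <= size xs -> Fchain (alpha j) (rev (map Om (take j xs))).
Proof.
elim: j => [|j IH] Hj; first by rewrite take0; apply: trunc0.
rewrite (take_nth 0 Hj) map_rcons rev_rcons.
exists (alpha j); split; last exact/IH/ltnW.
have [d /occP] := fv_occurs (nth_Free_fv Hj).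
by case: (occ _ M) (extr_seq_occ Hj) => // a L /extr_seq_plus.
Qed.
End Truncation.

Theorem lemma2p15 (O : var -> nat) (Om : var -> formula)
  (HO : injective O) (HOm : forall (phi : formula) (k : nat), exists x, k <= x /\ Om x = phi)
  (M : term) (HM : LambdaNF O Om M) :
  let al := bp_of Om M in
  let xs := Free O M in
  let n := size xs in
  let al_ := fun i => bp_trunc O M al i in
  (forall i, i <= n ->
     let be := bp_of Om (lams (drop i xs) M) in
     (forall c, be c <> None <-> exists a, c = nseq (n - i) 1 ++ a /\ al_ i a <> None) /\
     (forall a, be (nseq (n - i) 1 ++ a) = al_ i a)) /\
  (forall i, 1 <= i <= n ->
     let x := nth 0 xs i.-1 in
     let chi := Om x in
     (exists as_ : seq address,
        [/\ uniq as_, (forall a, a \in as_ <-> subterm M a = Some (Var x))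
          & extr_seq chi as_ (al_ i) (al_ i.-1)]) /\
     (forall (bs : seq address) (al' : blueprint),
        uniq bs -> (forall a, a \in bs <-> subterm M a = Some (Var x)) ->
        extr_seq chi bs (al_ i) al' -> al' =1 al_ i.-1)) /\
  inF al (map Om xs).
Proof.
case: HM => wf_M [psi Hty] bn_M; have HRM_M : HRM O M by case: Hty.
move=> al xs n al_; split; [|split].
- move=> i Hi be; have lams_pre a : be (nseq (n - i) 1 ++ a) = al_ i a.
    by rewrite /be bp_of_lams // prefix_prefix drop_size_cat ?size_nseq.
  split=> // c; split=> [|[a [-> Ha]]]; last by rewrite lams_pre.
  rewrite /be bp_of_lams //; case: ifP => // /prefixP[a ->].
  by rewrite drop_size_cat ?size_nseq // => Ha; exists a.
- case=> [|i] // /andP[_ Hi] x chi; split.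
  + exists (occ x M); split=> [|a|]; first exact: occ_uniq.
      exact: iff_sym (rwP (occP _ _ _)).
    exact: extr_seq_occ.
  + by move=> bs al' _ Hbs /extr_seq_prune E c; rewrite E prune_occurrences.
- rewrite /inF -(take_size xs).
  exact: Fchain_eql (Fchain_trunc Om HO wf_M HRM_M bn_M (leqnn n)) (trunc_size O Om M).
Qed.
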